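(* For all $p,\alpha\in(0,1)$ there exists $\varepsilon_0>0$ such that for every $0<\varepsilon\le\varepsilon_0$ there exists $n_0$ such that the following holds. Suppose $G$ is a graph on $n\ge n_0$ vertices in which every vertex has even degree, $G$ is lower-$(p,\varepsilon)$-regular and $\delta(G)\ge\alpha n$. Then there is an orientation $G'$ of $G$ such that $G'$ is Eulerian (i.e. $d^+_{G'}(v)=d^-_{G'}(v)$ for all $v$) and lower-$(p/4,\varepsilon)$-regular.
   Context: For $0<\varepsilon,p<1$, a graph (resp. digraph) $G$ on $n$ vertices is lower-$(p,\varepsilon)$-regular if $e_G(S,T)\ge(p-\varepsilon)|S||T|$ for all disjoint $S,T\subseteq V(G)$ with $|S|,|T|\ge\varepsilon n$, where $e_G(S,T)$ counts edges between $S$ and $T$ (resp. directed from $S$ to $T$). *)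

From HB Require Import structures.
From mathcomp Require Import all_boot all_order all_algebra.
From mathcomp Require Import reals.
Set Implicit Arguments. Unset Strict Implicit. Unset Printing Implicit Defensive.
Import Order.TTheory GRing.Theory Num.Theory.
Local Open Scope ring_scope.

Definition simple_graph n (G : rel 'I_n) : Prop :=
  (forall x y, G x y = G y x) /\ (forall x, ~~ G x x).

(* e_G(S,T): number of pairs (x,y) in S x T with G x y
   (edges between S and T for a graph; directed from S to T for a digraph) *)
Definition e_rel n (G : rel 'I_n) (S T : {set 'I_n}) : nat :=
  #|[set xy in setX S T | G xy.1 xy.2]|.

Definition lower_regular (R : realType) n (G : rel 'I_n) (p eps : R) : Prop :=
  forall S T : {set 'I_n}, [disjoint S & T] ->
    eps * n%:R <= #|S|%:R -> eps * n%:R <= #|T|%:R ->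
    (p - eps) * #|S|%:R * #|T|%:R <= (e_rel G S T)%:R.

Definition deg n (G : rel 'I_n) (v : 'I_n) : nat := #|[set y | G v y]|.
Definition outdeg n (D : rel 'I_n) (v : 'I_n) : nat := #|[set y | D v y]|.
Definition indeg n (D : rel 'I_n) (v : 'I_n) : nat := #|[set y | D y v]|.

Definition orientation n (G D : rel 'I_n) : Prop :=
  (forall x y, G x y = D x y || D y x) /\ (forall x y, ~~ (D x y && D y x)).

Definition eulerian n (D : rel 'I_n) : Prop := forall v, outdeg D v = indeg D v.

From HB Require Import structures.
From mathcomp Require Import all_boot all_order all_algebra.
From mathcomp Require Import reals.
From mathcomp Require Import zify ring lra.
Set Implicit Arguments. Unset Strict Implicit. Unset Printing Implicit Defensive.
Import Order.TTheory GRing.Theory Num.Theory.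

(* Delete edge-disjoint 4-cycles from G until the remainder L contains no
   4-cycle.  By the Kovari-Sos-Turan count, L has O(n^(3/2)) edges, hence
   at most 3 eps^3 n^2 for large n; being even, L has an Eulerian
   orientation (repeatedly delete a triangle or replace a path u-v-w by the
   edge uw).  Orienting each deleted 4-cycle in one of its two cyclic
   directions keeps the orientation Eulerian.  For a dense pair (S, T) the
   4-cycles carry M >= (p - 4 eps)|S||T| edges between S and T, and an
   exponential-moment (Chernoff) count shows that at most a (49/50)^M
   fraction of the 2^k choices of directions give fewer than M/4 of them
   the direction S -> T.  Since M >= 50(2n + 1), a union bound over the
   4^n pairs (S, T) leaves a good choice. *)

Lemma card_set_sumb (T : finType) (P : pred T) : #|[set x | P x]| = \sum_x (P x : nat).
Proof. by rewrite -sum1_card big_mkcond; apply: eq_bigr => x _; rewrite inE; case: (P x). Qed.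

Lemma cauchy_schwarz_nat (I : finType) (f : I -> nat) :
  (\sum_i f i) * (\sum_i f i) <= #|I| * \sum_i f i * f i.
Proof.
rewrite -(@leq_pmul2l 2) //.
have -> : 2 * ((\sum_i f i) * (\sum_i f i)) = \sum_i \sum_j 2 * (f i * f j).
  by rewrite big_distrlr big_distrr /=; apply: eq_bigr => i _; rewrite big_distrr.
have -> : 2 * (#|I| * \sum_i f i * f i) = \sum_i \sum_j (f i * f i + f j * f j).
  under [RHS]eq_bigr do rewrite big_split /= sum_nat_const.
  by rewrite big_split /= -big_distrr /= sum_nat_const mul2n -addnn mulnC.
apply: leq_sum => i _; apply: leq_sum => j _.
by have := (nat_Cauchy (f i) (f j)).1; rewrite !expnS !expn0 !muln1.
Qed.

Section ChoiceSums.
Variables (T : Type) (f : T -> bool -> nat).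

(* [bs] picks one of two options for each element of [qs]; missing entries
   default to [false]. *)
Fixpoint sum_chosen (qs : seq T) (bs : seq bool) : nat :=
  if qs is q :: qs' then f q (head false bs) + sum_chosen qs' (behead bs) else 0.

Definition sum_both (qs : seq T) : nat := \sum_(q <- qs) (f q true + f q false).

End ChoiceSums.

Section Digraphs.
Variable n : nat.
Local Notation V := 'I_n.
Implicit Types (D H : rel V) (l : seq (V * V)) (S T : {set V}).

Definition add_arcs D l : rel V := fun x y => D x y || ((x, y) \in l).
Definition rev_arcs l := [seq (e.2, e.1) | e <- l].
Definition both_ways l := l ++ rev_arcs l.
Definition arc_from_to S T (e : V * V) := (e.1 \in S) && (e.2 \in T).
Definition balanced l :=
  forall x, count (fun e => e.1 == x) l = count (fun e => e.2 == x) l.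
Definition even_degrees H := forall v, ~~ odd (deg H v).

Lemma eq_e_rel D1 D2 S T : D1 =2 D2 -> e_rel D1 S T = e_rel D2 S T.
Proof. by move=> E; apply: eq_card => xy; rewrite !inE E. Qed.

Lemma e_rel_sum D S T : e_rel D S T = \sum_(x in S) \sum_(y in T) (D x y : nat).
Proof.
rewrite pair_big_dep /= /e_rel -sum1_card big_mkcond [RHS]big_mkcond /=.
by apply: eq_bigr => -[x y] _; rewrite !inE /=; case: (x \in S); case: (y \in T); case: (D x y).
Qed.

Lemma outdeg_e_rel D x : outdeg D x = e_rel D [set x] setT.
Proof.
rewrite e_rel_sum big_set1 /outdeg -sum1_card big_mkcond [RHS]big_mkcond.
by apply: eq_bigr => y _; rewrite !inE; case: (D x y).
Qed.

Lemma indeg_e_rel D x : indeg D x = e_rel D setT [set x].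
Proof.
rewrite e_rel_sum; under [RHS]eq_bigr do rewrite big_set1.
rewrite /indeg -sum1_card big_mkcond [RHS]big_mkcond.
by apply: eq_bigr => y _; rewrite !inE; case: (D y x).
Qed.

Lemma e_rel_add_arcs D l S T : uniq l -> (forall e, e \in l -> ~~ D e.1 e.2) ->
  e_rel (add_arcs D l) S T = e_rel D S T + count (arc_from_to S T) l.
Proof.
move=> ul lD; rewrite /e_rel (_ : [set xy in _ | _] =
  [set xy in setX S T | D xy.1 xy.2] :|: [set e in l | arc_from_to S T e]).
  rewrite cardsU (_ : _ :&: _ = set0) ?cards0 ?subn0; last first.
    apply/setP => e; rewrite !inE; apply/negP => /andP[/andP[_ De] /andP[le _]].
    by move: (lD e le); rewrite De.
  rewrite -size_filter -(card_uniqP (filter_uniq _ ul)); congr (_ + _).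
  by apply: eq_card => e; rewrite !inE mem_filter andbC.
apply/setP => -[x y]; rewrite !inE /add_arcs /arc_from_to /=.
by case: (x \in S); case: (y \in T); case: (D x y); case: (_ \in l).
Qed.

Lemma outdeg_add_arcs D l x : uniq l -> (forall e, e \in l -> ~~ D e.1 e.2) ->
  outdeg (add_arcs D l) x = outdeg D x + count (fun e => e.1 == x) l.
Proof.
move=> ul lD; rewrite !outdeg_e_rel e_rel_add_arcs //; congr (_ + _).
by apply: eq_count => e; rewrite /arc_from_to !inE andbT.
Qed.

Lemma indeg_add_arcs D l x : uniq l -> (forall e, e \in l -> ~~ D e.1 e.2) ->
  indeg (add_arcs D l) x = indeg D x + count (fun e => e.2 == x) l.
Proof.
move=> ul lD; rewrite !indeg_e_rel e_rel_add_arcs //; congr (_ + _).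
by apply: eq_count => e; rewrite /arc_from_to !inE.
Qed.

Lemma mem_rev_arcs l x y : ((x, y) \in rev_arcs l) = ((y, x) \in l).
Proof. by elim: l => [|[a b] l IH] //=; rewrite !in_cons IH !xpair_eqE andbC. Qed.

Lemma rev_arcsK : involutive rev_arcs.
Proof. by elim=> [|[a b] l IH] //=; rewrite IH. Qed.

Lemma mem_both_ways l x y :
  ((x, y) \in both_ways l) = ((x, y) \in l) || ((y, x) \in l).
Proof. by rewrite mem_cat mem_rev_arcs. Qed.

Lemma both_ways_rev l : both_ways (rev_arcs l) =i both_ways l.
Proof. by move=> e; rewrite /both_ways rev_arcsK !mem_cat orbC. Qed.

Lemma uniq_both_ways_rev l : uniq (both_ways (rev_arcs l)) = uniq (both_ways l).
Proof. by rewrite /both_ways rev_arcsK uniq_catC. Qed.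

Lemma balanced_rev l : balanced l -> balanced (rev_arcs l).
Proof. by move=> bl x; rewrite /rev_arcs !count_map; exact: esym (bl x). Qed.

Definition cycle_arcs (s : seq V) := zip s (rot 1 s).

Lemma balanced_cycle_arcs s : balanced (cycle_arcs s).
Proof.
move=> x; rewrite /cycle_arcs.
have -> : count (fun e => e.1 == x) (zip s (rot 1 s)) = count (pred1 x) (unzip1 (zip s (rot 1 s))).
  by rewrite count_map.
have -> : count (fun e => e.2 == x) (zip s (rot 1 s)) = count (pred1 x) (unzip2 (zip s (rot 1 s))).
  by rewrite count_map.
rewrite unzip1_zip ?unzip2_zip ?size_rot //.
have /permP -> // : perm_eq (rot 1 s) s by rewrite perm_rot.
Qed.

Lemma deg_add_both_ways H l v : uniq (both_ways l) ->
  (forall e, e \in both_ways l -> ~~ H e.1 e.2) ->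
  deg (add_arcs H (both_ways l)) v =
  deg H v + count (fun e => e.1 == v) l + count (fun e => e.2 == v) l.
Proof.
move=> ul lH; have -> : deg = outdeg by [].
by rewrite outdeg_add_arcs // count_cat count_map addnA.
Qed.

Lemma deg_add_balanced H l v : uniq (both_ways l) -> balanced l ->
  (forall e, e \in both_ways l -> ~~ H e.1 e.2) ->
  deg (add_arcs H (both_ways l)) v = deg H v + (count (fun e => e.1 == v) l).*2.
Proof. by move=> ul bl lH; rewrite deg_add_both_ways // -addnA -bl addnn. Qed.

Lemma symmetric_add_both_ways H l : symmetric H -> symmetric (add_arcs H (both_ways l)).
Proof. by move=> Hs x y; rewrite /add_arcs !mem_both_ways Hs; congr (_ || _); exact: orbC. Qed.

Definition del_arcs D l : rel V := fun x y => D x y && ((x, y) \notin l).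

Lemma del_arcs_notin D l e : e \in l -> ~~ del_arcs D l e.1 e.2.
Proof. by rewrite /del_arcs -surjective_pairing => ->; rewrite andbF. Qed.

Lemma add_del_arcs D l : (forall e, e \in l -> D e.1 e.2) -> D =2 add_arcs (del_arcs D l) l.
Proof.
move=> lD x y; rewrite /add_arcs /del_arcs.
by case xyl: ((x, y) \in l); rewrite ?orbT ?andbT ?orbF // (lD (x, y)).
Qed.

Lemma symmetric_del_both_ways H l : symmetric H -> symmetric (del_arcs H (both_ways l)).
Proof. by move=> Hs x y; rewrite /del_arcs !mem_both_ways Hs; congr (_ && ~~ _); exact: orbC. Qed.

Lemma eq_orientation H1 H2 D : H1 =2 H2 -> orientation H2 D -> orientation H1 D.
Proof. by move=> E [HD Da]; split=> // x y; rewrite E HD. Qed.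

Lemma eq_eulerian D1 D2 : D1 =2 D2 -> eulerian D2 -> eulerian D1.
Proof.
move=> E ED x; have := ED x.
by rewrite !outdeg_e_rel !indeg_e_rel !(eq_e_rel _ _ E).
Qed.

Lemma eq_add_arcs D l1 l2 : l1 =i l2 -> add_arcs D l1 =2 add_arcs D l2.
Proof. by move=> E x y; rewrite /add_arcs E. Qed.

Lemma orientation_arc H D x y : orientation H D -> D x y -> H x y.
Proof. by case=> HD _ Dxy; rewrite HD Dxy. Qed.

Lemma orientation_add_arcs H D l : orientation H D -> uniq (both_ways l) ->
  (forall e, e \in both_ways l -> ~~ H e.1 e.2) ->
  orientation (add_arcs H (both_ways l)) (add_arcs D l).
Proof.
move=> [HD Da] ul lH; split=> x y.
  rewrite /add_arcs mem_both_ways HD.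
  by case: (D x y); case: (D y x); case: ((x, y) \in l); case: ((y, x) \in l).
have lnD u v : (u, v) \in l -> ~~ (D u v || D v u).
  by move=> uv; rewrite -HD; apply: (lH (u, v)); rewrite mem_both_ways uv.
have l_antisym u v : (u, v) \in l -> (v, u) \in l -> False.
  move: ul; rewrite cat_uniq => /and3P[_ /hasP nh _] uv vu.
  by apply: nh; exists (u, v); rewrite ?mem_rev_arcs.
apply/negP => /andP[/orP[Dxy|xyl] /orP[Dyx|yxl]].
- by have := Da x y; rewrite Dxy Dyx.
- by have := lnD _ _ yxl; rewrite Dxy orbT.
- by have := lnD _ _ xyl; rewrite Dyx orbT.
- exact: l_antisym xyl yxl.
Qed.

Lemma orientation_del_arcs H D l : orientation (add_arcs H (both_ways l)) D ->
  (forall e, e \in l -> D e.1 e.2) -> (forall e, e \in both_ways l -> ~~ H e.1 e.2) ->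
  orientation H (del_arcs D l).
Proof.
move=> [HD Da] lD lH; split; last first.
  by move=> x y; apply/negP => /andP[/andP[Dxy _] /andP[Dyx _]]; have := Da x y; rewrite Dxy Dyx.
have nD u v : (u, v) \in both_ways l -> del_arcs D l u v = false.
  rewrite mem_both_ways => /orP[uvl|vul]; first exact: negbTE (del_arcs_notin D uvl).
  by have := Da u v; rewrite /del_arcs (lD (v, u) vul) andbT => /negbTE ->.
move=> x y; case xyL: ((x, y) \in both_ways l).
  have yxL : (y, x) \in both_ways l by rewrite mem_both_ways orbC -mem_both_ways.
  by rewrite (negbTE (lH _ xyL)) !nD.
have := HD x y; rewrite /add_arcs xyL orbF => ->.
by move: xyL; rewrite /del_arcs mem_both_ways => /norP[/negbTE -> /negbTE ->]; rewrite !andbT.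
Qed.

Lemma eulerian_add_arcs D l : eulerian D -> uniq l ->
  (forall e, e \in l -> ~~ D e.1 e.2) -> balanced l -> eulerian (add_arcs D l).
Proof. by move=> ED ul lD bl x; rewrite outdeg_add_arcs // indeg_add_arcs // ED bl. Qed.

Lemma eulerian_exchange_arcs D l1 l2 : uniq l1 -> uniq l2 ->
  (forall e, e \in l1 -> ~~ D e.1 e.2) -> (forall e, e \in l2 -> ~~ D e.1 e.2) ->
  (forall x, count (fun e => e.1 == x) l1 + count (fun e => e.2 == x) l2 =
             count (fun e => e.2 == x) l1 + count (fun e => e.1 == x) l2) ->
  eulerian (add_arcs D l1) -> eulerian (add_arcs D l2).
Proof.
move=> u1 u2 n1 n2 bal E x; have := E x; have := bal x.
rewrite !outdeg_add_arcs // !indeg_add_arcs //; lia.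
Qed.

Lemma orientation_add_balanced H D l : orientation H D -> eulerian D ->
  uniq (both_ways l) -> balanced l -> (forall e, e \in both_ways l -> ~~ H e.1 e.2) ->
  [/\ orientation (add_arcs H (both_ways l)) (add_arcs D l), eulerian (add_arcs D l) &
      forall S T, e_rel (add_arcs D l) S T = e_rel D S T + count (arc_from_to S T) l].
Proof.
move=> OD ED ul bl lH; have ul1 : uniq l by move: ul; rewrite cat_uniq => /andP[].
have lD e : e \in l -> ~~ D e.1 e.2.
  by move=> el; apply/negP => /(orientation_arc OD); apply/negP; apply: lH; rewrite mem_cat el.
split; [exact: orientation_add_arcs | exact: eulerian_add_arcs |].
by move=> S T; rewrite e_rel_add_arcs.
Qed.

Definition even_graph H := [/\ symmetric H, irreflexive H & even_degrees H].

Lemma even_graph_del_balanced H l : even_graph H -> uniq (both_ways l) -> balanced l ->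
  (forall e, e \in l -> H e.1 e.2) ->
  let H' := del_arcs H (both_ways l) in
  [/\ even_graph H', H =2 add_arcs H' (both_ways l) &
      forall S T, e_rel H S T = e_rel H' S T + count (arc_from_to S T) (both_ways l)].
Proof.
move=> [Hs Hi He] ul bl lH H'.
have bH e : e \in both_ways l -> H e.1 e.2.
  by case: e => x y; rewrite mem_both_ways => /orP[/lH|/lH] //=; rewrite Hs.
have E := add_del_arcs bH.
have nH' e : e \in both_ways l -> ~~ H' e.1 e.2 by apply: del_arcs_notin.
split => //; last by move=> S T; rewrite (eq_e_rel _ _ E) e_rel_add_arcs.
split; [exact: symmetric_del_both_ways | by move=> x; rewrite /H' /del_arcs Hi |].
move=> v; have := He v.
have -> : deg H v = deg (add_arcs H' (both_ways l)) v by apply: eq_card => y; rewrite !inE E.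
by rewrite deg_add_balanced // oddD odd_double addbF.
Qed.

Lemma uniq_both_ways_edge u v : u != v -> uniq (both_ways [:: (u, v)]).
Proof. by move=> uv; rewrite /= !inE xpair_eqE (negbTE uv). Qed.

Lemma uniq_both_ways_path u v w : uniq [:: u; v; w] -> uniq (both_ways [:: (u, v); (v, w)]).
Proof.
rewrite /= !inE !negb_or => /and3P[/andP[uv uw] vw _].
rewrite !xpair_eqE !(eq_sym v u, eq_sym w u, eq_sym w v).
by rewrite !(negbTE uv, negbTE uw, negbTE vw) ?andbF.
Qed.

Lemma uniq_both_ways_cycle3 u v w : uniq [:: u; v; w] ->
  uniq (both_ways (cycle_arcs [:: u; v; w])).
Proof.
rewrite /= !inE !negb_or => /and3P[/andP[uv uw] vw _].
rewrite !xpair_eqE !(eq_sym v u, eq_sym w u, eq_sym w v).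
by rewrite !(negbTE uv, negbTE uw, negbTE vw) ?andbF.
Qed.

Lemma uniq_both_ways_cycle4 u v w x : uniq [:: u; v; w; x] ->
  uniq (both_ways (cycle_arcs [:: u; v; w; x])).
Proof.
rewrite /= !inE !negb_or => /and4P[/and3P[uv uw ux] /andP[vw vx] wx _].
rewrite !xpair_eqE !(eq_sym v u, eq_sym w u, eq_sym x u, eq_sym w v, eq_sym x v, eq_sym x w).
by rewrite !(negbTE uv, negbTE uw, negbTE ux, negbTE vw, negbTE vx, negbTE wx) ?andbF.
Qed.

Definition has_eulerian_orientation H := exists D, orientation H D /\ eulerian D.

Lemma eq_has_eulerian_orientation H1 H2 :
  H1 =2 H2 -> has_eulerian_orientation H2 -> has_eulerian_orientation H1.
Proof. by move=> E [D [OD ED]]; exists D; split=> //; apply: eq_orientation E OD. Qed.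

Lemma has_eulerian_orientation0 H : (forall x y, ~~ H x y) -> has_eulerian_orientation H.
Proof.
move=> nH; exists (fun _ _ => false); split; first by split=> // x y; rewrite (negbTE (nH x y)).
by move=> x; apply: eq_card => y; rewrite !inE.
Qed.

Lemma eulerian_subdivide_arc H D a b c :
  orientation (add_arcs H (both_ways [:: (a, b)])) D -> eulerian D -> D a b ->
  uniq (both_ways [:: (a, c); (c, b)]) ->
  (forall e, e \in both_ways [:: (a, b)] -> ~~ H e.1 e.2) ->
  (forall e, e \in both_ways [:: (a, c); (c, b)] -> ~~ H e.1 e.2) ->
  has_eulerian_orientation (add_arcs H (both_ways [:: (a, c); (c, b)])).
Proof.
move=> OD ED Dab up abH pH.
have abD e : e \in [:: (a, b)] -> D e.1 e.2 by rewrite inE => /eqP->.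
pose D0 := del_arcs D [:: (a, b)].
have O0 : orientation H D0 := orientation_del_arcs OD abD abH.
have pD0 e : e \in [:: (a, c); (c, b)] -> ~~ D0 e.1 e.2.
  by move=> ep; apply/negP => /(orientation_arc O0); apply/negP; apply: pH; rewrite mem_cat ep.
exists (add_arcs D0 [:: (a, c); (c, b)]); split; first exact: orientation_add_arcs.
apply: (@eulerian_exchange_arcs _ [:: (a, b)]) => //.
- by move: up; rewrite cat_uniq => /andP[].
- by move=> e el; apply: del_arcs_notin.
- by move=> x /=; lia.
- by apply: eq_eulerian ED => x y; rewrite -add_del_arcs.
Qed.

Lemma has_eulerian_orientation_subdivide H D a b c : symmetric H ->
  orientation (add_arcs H (both_ways [:: (a, b)])) D -> eulerian D ->
  uniq [:: a; c; b] -> ~~ H a b -> ~~ H a c -> ~~ H c b ->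
  has_eulerian_orientation (add_arcs H (both_ways [:: (a, c); (c, b)])).
Proof.
move=> Hs OD ED acb ab ac cb.
have nH l : {subset l <= both_ways [:: (a, b); (a, c); (c, b)]} ->
    forall e, e \in both_ways l -> ~~ H e.1 e.2.
  move=> sl [x y]; rewrite mem_both_ways => /orP[/sl|/sl];
    by rewrite mem_both_ways !inE => /orP[]/or3P[]/eqP[-> ->]; rewrite // Hs.
have : D a b || D b a by rewrite -OD.1 /add_arcs mem_both_ways mem_head orbT.
case/orP => [Dab|Dba].
  apply: (eulerian_subdivide_arc OD ED Dab); first exact: uniq_both_ways_path.
    by apply: nH; apply/allP; rewrite /= !inE !eqxx.
  by apply: nH; apply/allP; rewrite /= !inE !eqxx ?orbT.
have E : both_ways [:: (a, c); (c, b)] =i both_ways [:: (b, c); (c, a)].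
  by move=> e; rewrite !inE; do ![case: (_ == _)].
apply: eq_has_eulerian_orientation (@eq_add_arcs H _ _ E) _.
apply: eulerian_subdivide_arc (ED) Dba _ _ _.
- by apply: eq_orientation OD; apply: eq_add_arcs => e; rewrite !inE orbC.
- by apply: uniq_both_ways_path; rewrite -rev_uniq.
- by apply: nH; apply/allP; rewrite /= !inE !eqxx ?orbT.
- by move=> e; rewrite -E; apply: nH; apply/allP; rewrite /= !inE !eqxx ?orbT.
Qed.

Section EulerianOrientation.
Variable H : rel V.
Hypothesis GH : even_graph H.
Hypothesis IH : forall H' : rel V, even_graph H' ->
  e_rel H' setT setT < e_rel H setT setT -> has_eulerian_orientation H'.

Lemma has_eulerian_orientation_triangle u v w : uniq [:: u; v; w] ->
  H u v -> H v w -> H w u -> has_eulerian_orientation H.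
Proof.
move=> uvw Huv Hvw Hwu; pose l := cycle_arcs [:: u; v; w].
have ul := uniq_both_ways_cycle3 uvw.
have bl := balanced_cycle_arcs [:: u; v; w].
have lH e : e \in l -> H e.1 e.2 by rewrite !inE => /or3P[] /eqP->.
have [G' E count_arcs] := even_graph_del_balanced GH ul bl lH.
have [D' [O' E']] : has_eulerian_orientation (del_arcs H (both_ways l)).
  by apply: IH G' _; rewrite count_arcs /= /arc_from_to !inE; lia.
have [OD ED _] := orientation_add_balanced O' E' ul bl (fun e => @del_arcs_notin H _ e).
by exists (add_arcs D' l); split => //; apply: eq_orientation E OD.
Qed.

Lemma has_eulerian_orientation_path u v w : uniq [:: u; v; w] ->
  H u v -> H v w -> ~~ H u w -> has_eulerian_orientation H.
Proof.
have [Hs Hi He] := GH; move=> uvw Huv Hvw Huw; pose p := [:: (u, v); (v, w)].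
have pH e : e \in both_ways p -> H e.1 e.2.
  by case: e => x y; rewrite mem_both_ways !inE => /orP[]/orP[]/eqP[-> ->] //; rewrite Hs.
pose H0 := del_arcs H (both_ways p).
have E0 : H =2 add_arcs H0 (both_ways p) := add_del_arcs pH.
have H0p e : e \in both_ways p -> ~~ H0 e.1 e.2 by apply: del_arcs_notin.
have nH0 x y : ~~ H x y -> ~~ H0 x y by apply: contra => /andP[].
have uw : u != w by move: uvw; rewrite /= !inE !negb_or => /and3P[/andP[]].
have H0uw e : e \in both_ways [:: (u, w)] -> ~~ H0 e.1 e.2.
  by rewrite !inE => /orP[]/eqP-> /=; apply: nH0; rewrite // Hs.
pose H2 := add_arcs H0 (both_ways [:: (u, w)]).
have u2 := uniq_both_ways_edge uw.
have G2 : even_graph H2.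
  split; first exact/symmetric_add_both_ways/symmetric_del_both_ways.
    move=> x; rewrite /H2 /add_arcs /H0 /del_arcs Hi /= !inE !xpair_eqE /=.
    by apply/norP; split; apply/negP => /andP[/eqP-> /eqP e]; rewrite e eqxx in uw.
  move=> x; have := He x.
  have -> : deg H x = deg H2 x + (v == x).*2.
    rewrite (_ : deg H x = deg (add_arcs H0 (both_ways p)) x).
      by rewrite !deg_add_both_ways ?uniq_both_ways_path //=; lia.
    by apply: eq_card => y; rewrite !inE E0.
  by rewrite oddD odd_double addbF.
have [D2 [O2 ED2]] : has_eulerian_orientation H2.
  apply: IH G2 _; rewrite (eq_e_rel _ _ E0) !e_rel_add_arcs ?uniq_both_ways_path //.
  by rewrite /= /arc_from_to !inE; lia.
apply: eq_has_eulerian_orientation E0 _.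
apply: has_eulerian_orientation_subdivide O2 ED2 _ _ _ _ => //.
- exact: symmetric_del_both_ways.
- exact: nH0.
- by apply: (H0p (u, v)); rewrite mem_both_ways !inE eqxx.
- by apply: (H0p (v, w)); rewrite mem_both_ways !inE eqxx orbT.
Qed.

End EulerianOrientation.

Lemma even_graph_neighbour H v u : even_graph H -> H v u -> exists2 w, H v w & w != u.
Proof.
move=> [_ _ He] Hvu; have := He v; rewrite /deg (cardsD1 u) inE Hvu /= => odd_rest.
have /card_gt0P[w] : 0 < #|[set y | H v y] :\ u|.
  by rewrite lt0n; apply: contra odd_rest => /eqP ->.
by rewrite !inE => /andP[wu Hvw]; exists w.
Qed.

Lemma has_eulerian_orientation_even H : even_graph H -> has_eulerian_orientation H.
Proof.
have [k] := ubnP (e_rel H setT setT); elim: k H => // k IH H /ltnSE hk GH.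
case: (pickP (fun e : V * V => H e.1 e.2)) => [[v u] /= Hvu | none]; last first.
  by apply: has_eulerian_orientation0 => x y; rewrite (none (x, y)).
have [Hs Hi _] := GH.
have [w Hvw wu] := even_graph_neighbour GH Hvu.
have IH' H' : even_graph H' -> e_rel H' setT setT < e_rel H setT setT ->
    has_eulerian_orientation H'.
  by move=> G' lt; apply: IH G'; apply: leq_trans lt hk.
have ne x y : H x y -> x != y by move=> Hxy; apply: contraTneq Hxy => ->; rewrite Hi.
have uvw : uniq [:: u; v; w].
  by rewrite /= !inE !negb_or eq_sym (ne _ _ Hvu) (eq_sym u w) wu (ne _ _ Hvw).
(* Either uvw is a triangle, or the path u-v-w can be replaced by the edge uw. *)
case Huw: (H u w).
  by apply: (has_eulerian_orientation_triangle GH IH' uvw); rewrite // Hs.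
by apply: (has_eulerian_orientation_path GH IH' uvw); rewrite ?Huw // Hs.
Qed.

Definition has_c4 H := [exists a, exists b, exists x, exists y,
  [&& a != b, x != y, H a x, H b x, H a y & H b y]].

Lemma e_rel_le_setT H S T : e_rel H S T <= e_rel H setT setT.
Proof. by apply/subset_leq_card/subsetP => xy; rewrite !inE => /andP[_ ->]; rewrite andbT. Qed.

Lemma e_rel_setT H : e_rel H setT setT = \sum_x deg H x.
Proof.
rewrite e_rel_sum; apply: eq_big => [x|x _]; first by rewrite inE.
by rewrite (_ : deg H x = outdeg H x) // outdeg_e_rel e_rel_sum big_set1.
Qed.

Lemma sum_deg_mul_le H : ~~ has_c4 H ->
  \sum_x deg H x * deg H x <= n * n + \sum_x deg H x.
Proof.
move=> noC4; have deg_sum x : deg H x = \sum_y (H x y : nat) by rewrite /deg card_set_sumb.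
have deg_mul x : deg H x * deg H x =
    \sum_y \sum_z ((H x y && H x z && (y != z)) : nat) + deg H x.
  rewrite {1 2}deg_sum big_distrlr /= deg_sum -big_split /=; apply: eq_bigr => y _.
  rewrite (eq_bigr (fun z => ((H x y && H x z && (y != z)) : nat) + ((z == y) && H x y))).
    rewrite big_split /=; congr (_ + _).
    by rewrite (bigD1 y) //= eqxx big1 ?addn0 // => z /negbTE ->.
  move=> z _; case: (eqVneq z y) => [->|zy]; rewrite ?eqxx ?andbF ?andbT /=.
    by case: (H x y).
  by case: (H x y); case: (H x z).
have codeg y z : y != z -> \sum_x ((H x y && H x z) : nat) <= 1.
  move=> yz; rewrite -card_set_sumb leqNgt; apply/negP => /card_gt1P[a [b []]].
  rewrite !inE => /andP[ay az] /andP[by' bz] ab; apply: (negP noC4).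
  by apply/existsP; exists a; apply/existsP; exists b; apply/existsP; exists y;
    apply/existsP; exists z; rewrite ab yz ay by' az bz.
under eq_bigr do rewrite deg_mul.
rewrite big_split /= leq_add2r exchange_big /=.
apply: (@leq_trans (\sum_(y : V) \sum_(z : V) 1)); last by rewrite !sum_nat_const !card_ord muln1.
apply: leq_sum => y _; rewrite exchange_big /=; apply: leq_sum => z _.
case: (eqVneq y z) => [->|yz]; first by rewrite big1 // => x _; rewrite andbF.
by apply: leq_trans (codeg y z yz); apply: leq_sum => x _; rewrite andbT.
Qed.

Lemma c4_free_arcs_mul_le H : ~~ has_c4 H ->
  e_rel H setT setT * e_rel H setT setT <= n * n * n + n * e_rel H setT setT.
Proof.
move=> noC4; rewrite e_rel_setT; apply: leq_trans (cauchy_schwarz_nat _) _.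
by rewrite card_ord -[n * n * n]mulnA -mulnDr leq_mul2l (sum_deg_mul_le noC4) orbT.
Qed.

Definition orient_cycle (q : seq V) (b : bool) :=
  if b then cycle_arcs q else rev_arcs (cycle_arcs q).

Fixpoint orient_cycles D (qs : seq (4.-tuple V)) (bs : seq bool) : rel V :=
  if qs is q :: qs' then add_arcs (orient_cycles D qs' (behead bs)) (orient_cycle q (head false bs))
  else D.

Definition arcs_in_cycle S T (q : 4.-tuple V) b := count (arc_from_to S T) (orient_cycle q b).

Lemma arcs_in_cycle_le4 S T q b : arcs_in_cycle S T q b <= 4.
Proof.
apply: leq_trans (count_size _ _) _.
by case: b; rewrite /orient_cycle ?size_map size_zip size_rot size_tuple minnn.
Qed.

Lemma both_ways_orient_cycle q b : both_ways (cycle_arcs q) =i both_ways (orient_cycle q b).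
Proof. by case: b => // e; rewrite both_ways_rev. Qed.

Lemma uniq_both_ways_orient_cycle q b :
  uniq (both_ways (orient_cycle q b)) = uniq (both_ways (cycle_arcs q)).
Proof. by case: b; rewrite ?uniq_both_ways_rev. Qed.

Lemma balanced_orient_cycle q b : balanced (orient_cycle q b).
Proof. by case: b; [exact: balanced_cycle_arcs | exact/balanced_rev/balanced_cycle_arcs]. Qed.

Lemma c4_decomposition H : even_graph H -> exists (L : rel V) (qs : seq (4.-tuple V)),
  [/\ even_graph L, ~~ has_c4 L,
      forall S T, e_rel H S T = e_rel L S T + sum_both (arcs_in_cycle S T) qs &
      forall D bs, orientation L D -> eulerian D ->
        [/\ orientation H (orient_cycles D qs bs), eulerian (orient_cycles D qs bs) &
            forall S T, e_rel (orient_cycles D qs bs) S T =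
                        e_rel D S T + sum_chosen (arcs_in_cycle S T) qs bs]].
Proof.
have [k] := ubnP (e_rel H setT setT); elim: k H => // k IH H /ltnSE hk GH.
case: (boolP (has_c4 H)) => [C4|noC4]; last first.
  exists H, [::]; split => //; first by move=> S T; rewrite /sum_both big_nil addn0.
  by move=> D bs OD ED; split => // S T; rewrite addn0.
case/existsP: C4 => a /existsP[b /existsP[x /existsP[y]]] /and5P[ab xy Hax Hbx /andP[Hay Hby]].
have [Hs Hi _] := GH; pose q := [tuple a; x; b; y].
have ne u v : H u v -> u != v by move=> Huv; apply: contraTneq Huv => ->; rewrite Hi.
have uq : uniq q.
  rewrite /= !inE !negb_or ab xy (ne _ _ Hax) (ne _ _ Hay) (eq_sym x b) (ne _ _ Hbx).
  by rewrite (ne _ _ Hby).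
have ul := uniq_both_ways_cycle4 uq.
have bl := balanced_cycle_arcs q.
have lH e : e \in cycle_arcs q -> H e.1 e.2 by rewrite !inE => /or4P[]/eqP->; rewrite //= Hs.
have [G' E count_arcs] := even_graph_del_balanced GH ul bl lH.
set H' := del_arcs H _ in G' E count_arcs.
have lt : e_rel H' setT setT < k.
  by move: hk; rewrite count_arcs /= /arc_from_to !inE /=; lia.
have [L [qs [GL noC4 eH' orient']]] := IH H' lt G'.
exists L, (q :: qs); split => //.
  move=> S T; rewrite count_arcs eH' /sum_both big_cons count_cat -addnA.
  by congr (_ + _); apply: addnC.
move=> D bs OD ED; have [O' E' e'] := orient' D (behead bs) OD ED.
have [OH EH eH] := @orientation_add_balanced H' _ (orient_cycle q (head false bs)) O' E'
  (etrans (uniq_both_ways_orient_cycle _ _) ul) (balanced_orient_cycle _ _)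
  (fun e el => del_arcs_notin _ (etrans (both_ways_orient_cycle _ _ e) el)).
split => //; last by move=> S T; rewrite /= eH e' -addnA; congr (_ + _); apply: addnC.
by apply: eq_orientation E _; apply: eq_orientation (eq_add_arcs _ (both_ways_orient_cycle q _)) OH.
Qed.

End Digraphs.

Fixpoint all_choices k : seq (seq bool) :=
  if k is k'.+1 then
    [seq true :: bs | bs <- all_choices k'] ++ [seq false :: bs | bs <- all_choices k']
  else [:: [::]].

Lemma size_all_choices k : size (all_choices k) = 2 ^ k.
Proof. by elim: k => //= k IH; rewrite size_cat !size_map IH expnS mul2n addnn. Qed.

Lemma count_exists_le (I : finType) (A : Type) (P : I -> pred A) (s : seq A) :
  count (fun x => [exists i, P i x]) s <= \sum_i count (P i) s.
Proof.
elim: s => [|x s IH] /=; first by rewrite big1.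
rewrite big_split /= leq_add //; case: existsP => [[i Pi]|] //.
by rewrite (bigD1 i) //= Pi.
Qed.

Section ChoiceCount.
Variable R : realType.
Local Open Scope ring_scope.
Local Notation sigma := (9 / 10 : R).
Local Notation rho := (49 / 50 : R).
Variable T : Type.

Section OneFamily.
Variable f : T -> bool -> nat.
Hypothesis f_le4 : forall q b, (f q b <= 4)%N.

(* The exponential-moment step of the Chernoff bound, checked on all 25
   possible value pairs. *)
Lemma exp_choice_pair_le q :
  sigma ^+ (4 * f q true) + sigma ^+ (4 * f q false) <= 2 * (rho * sigma) ^+ (f q true + f q false).
Proof.
have := f_le4 q true; have := f_le4 q false.
move: (f q true) (f q false) => a b hb ha.
do 5?[case: a ha => [|a] ha //]; do 5?[case: b hb => [|b] hb //];
  rewrite /= ?expr0 ?exprS ?expr0 ?mulr1; lra.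
Qed.

Lemma sum_exp_chosen_le qs :
  \sum_(bs <- all_choices (size qs)) sigma ^+ (4 * sum_chosen f qs bs)
    <= 2 ^+ size qs * (rho * sigma) ^+ sum_both f qs.
Proof.
elim: qs => [|q qs IH] /=; first by rewrite big_cons big_nil /sum_both big_nil !expr0 addr0 mulr1.
rewrite big_cat !big_map /=.
under eq_bigr do rewrite mulnDr exprD.
under [X in _ + X <= _]eq_bigr do rewrite mulnDr exprD.
rewrite -!big_distrr /= -mulrDl /sum_both big_cons -/(sum_both f qs) exprD exprS.
set A := _ + _.
have A0 : 0 <= A by apply: addr_ge0; apply: exprn_ge0; lra.
apply: le_trans (ler_wpM2l A0 IH) _.
set P := 2 ^+ size qs * _.
have P0 : 0 <= P by apply: mulr_ge0; apply: exprn_ge0; lra.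
have -> : 2 * 2 ^+ size qs *
    ((rho * sigma) ^+ (f q true + f q false) * (rho * sigma) ^+ sum_both f qs) =
    (2 * (rho * sigma) ^+ (f q true + f q false)) * P by rewrite /P; ring.
by apply: ler_wpM2r => //; apply: exp_choice_pair_le.
Qed.

Lemma count_low_choices qs :
  (count (fun bs => 4 * sum_chosen f qs bs < sum_both f qs)%N (all_choices (size qs)))%:R
    <= 2 ^+ size qs * rho ^+ sum_both f qs.
Proof.
have s0 : 0 < sigma by lra.
have -> : 2 ^+ size qs * rho ^+ sum_both f qs =
    sigma ^- sum_both f qs * (2 ^+ size qs * (rho * sigma) ^+ sum_both f qs).
  have : sigma ^+ sum_both f qs != 0 by apply: expf_neq0; lra.
  rewrite (exprMn _ rho sigma); set a := sigma ^+ sum_both f qs; set b := rho ^+ sum_both f qs.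
  by move=> a0; rewrite (mulrC b a) mulrCA mulKf.
have i0 : 0 <= sigma ^- sum_both f qs by rewrite invr_ge0; apply: exprn_ge0; lra.
apply: le_trans; last exact: (ler_wpM2l i0 (sum_exp_chosen_le qs)).
rewrite -sum1_count natr_sum big_distrr /= big_mkcond /=.
apply: ler_sum => bs _; case: ifP => h; last first.
  by apply: mulr_ge0; [rewrite invr_ge0|]; apply: exprn_ge0; lra.
rewrite ler_pdivlMl; last by apply: exprn_gt0.
by rewrite mulr1; apply: ler_wiXn2l; [lra|lra|exact: ltnW].
Qed.

End OneFamily.

Lemma exists_choice_all_high (I : finType) (P : pred I) (F : I -> T -> bool -> nat) qs :
  (forall i q b, (F i q b <= 4)%N) -> \sum_(i | P i) rho ^+ sum_both (F i) qs < 1 ->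
  exists bs, forall i, P i -> (sum_both (F i) qs <= 4 * sum_chosen (F i) qs bs)%N.
Proof.
move=> F_le4 small; pose k := size qs.
pose low i bs := (4 * sum_chosen (F i) qs bs < sum_both (F i) qs)%N.
pose bad bs := [exists i, P i && low i bs].
have few_bad : (count bad (all_choices k) < 2 ^ k)%N.
  rewrite -(ltr_nat R); apply: (@le_lt_trans _ _
    (\sum_i (count (fun bs => P i && low i bs) (all_choices k))%:R)).
    by rewrite -natr_sum ler_nat count_exists_le.
  rewrite (bigID P) /= [X in _ + X]big1 ?addr0; last first.
    by move=> i /negbTE Pi; rewrite (@eq_count _ _ pred0) ?count_pred0 // => bs; rewrite Pi.
  apply: (@le_lt_trans _ _ (\sum_(i | P i) 2 ^+ k * rho ^+ sum_both (F i) qs)).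
    apply: ler_sum => i Pi; rewrite (@eq_count _ _ (low i)) => [|bs]; last by rewrite Pi.
    exact: count_low_choices.
  by rewrite -big_distrr /= natrX -[X in _ < X]mulr1 ltr_pM2l // exprn_gt0.
have /hasP[bs _ good] : has (predC bad) (all_choices k).
  rewrite has_count -(ltn_add2l (count bad (all_choices k))) addn0 count_predC.
  by rewrite size_all_choices.
exists bs => i Pi; rewrite leqNgt; apply: contra good => lowi.
by apply/existsP; exists i; rewrite Pi; apply: lowi.
Qed.

End ChoiceCount.

Section Estimates.
Variable R : realType.
Local Open Scope ring_scope.

Lemma le_of_mul_le_cube (n m : nat) (d : R) : 0 < d <= 1 -> 2 < d * d * n%:R ->
  (m * m <= n * n * n + n * m)%N -> m%:R <= d * n%:R ^+ 2.
Proof.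
move=> /andP[d0 d1] hn; rewrite -(ler_nat R) !natrD !natrM.
set M := m%:R; set N := n%:R => hm.
have N0 : 0 < N by nra.
have M0 : 0 <= M by rewrite /M ler0n.
rewrite leNgt; apply/negP => hlt.
have dN : 2 < d * N by nra.
have M2N : 2 * N < M by nra.
have hM3 : M * M <= 2 * (N * N * N) by nra.
have dN2 : 0 <= d * N ^+ 2 by apply: mulr_ge0; [lra | apply: exprn_ge0; lra].
have lt_sq : (d * N ^+ 2) * (d * N ^+ 2) < M * M by apply: ltr_pM.
suff : 2 * (N * N * N) < (d * N ^+ 2) * (d * N ^+ 2) by lra.
have -> : (d * N ^+ 2) * (d * N ^+ 2) = (d * d * N) * (N * N * N) by rewrite expr2; ring.
by rewrite ltr_pM2r //; apply: mulr_gt0 => //; apply: mulr_gt0.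
Qed.

Lemma pair_arcs_lower (p eps : R) (n mL M s t : nat) : 0 < eps ->
  eps * n%:R <= s%:R -> eps * n%:R <= t%:R ->
  (p - eps) * s%:R * t%:R <= (mL + M)%:R -> mL%:R <= 3 * eps ^+ 3 * n%:R ^+ 2 ->
  (p - 4 * eps) * (s%:R * t%:R) <= M%:R.
Proof.
move=> e0 hs ht; rewrite natrD => hst hmL.
have en0 : 0 <= eps * n%:R by apply: mulr_ge0; [lra | apply: ler0n].
have : (eps * n%:R) ^+ 2 <= s%:R * t%:R by rewrite expr2; apply: ler_pM.
have e3 : 3 * eps ^+ 3 * n%:R ^+ 2 = 3 * eps * (eps * n%:R) ^+ 2 by ring.
rewrite e3 in hmL.
rewrite -mulrA in hst; move: hst hmL.
set st := s%:R * t%:R; set en := (eps * n%:R) ^+ 2; nra.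
Qed.

Lemma pair_arcs_many (p eps : R) (n M s t : nat) : 0 < p -> 0 < eps -> eps <= p / 8 ->
  300 < p * (eps * eps) * n%:R -> eps * n%:R <= s%:R -> eps * n%:R <= t%:R ->
  (p - 4 * eps) * (s%:R * t%:R) <= M%:R -> (50 * (2 * n + 1) <= M)%N.
Proof.
move=> p0 e0 ep hn hs ht hM; rewrite -(ler_nat R) natrM natrD natrM.
have n1 : 1 <= n%:R :> R.
  by rewrite ler1n lt0n; apply/negP => /eqP n0; move: hn; rewrite n0 mulr0; lra.
have en0 : 0 <= eps * n%:R by apply: mulr_ge0; [lra | apply: ler0n].
have hst : (eps * n%:R) ^+ 2 <= s%:R * t%:R by rewrite expr2; apply: ler_pM.
have st0 : 0 <= s%:R * t%:R :> R by apply: mulr_ge0; apply: ler0n.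
have h1 : p / 2 * (s%:R * t%:R) <= M%:R by apply: le_trans hM; apply: ler_wpM2r => //; lra.
have h2 : p / 2 * (eps * n%:R) ^+ 2 <= p / 2 * (s%:R * t%:R) by apply: ler_wpM2l => //; lra.
have h3 : 150 * n%:R <= p / 2 * (eps * n%:R) ^+ 2.
  have -> : p / 2 * (eps * n%:R) ^+ 2 = p * (eps * eps) * n%:R / 2 * n%:R by rewrite expr2; field.
  by apply: ler_wpM2r; [apply: ler0n | lra].
lra.
Qed.

Lemma rho50_le_half : (49 / 50 : R) ^+ 50 <= 1 / 2.
Proof.
have h10 : (49 / 50 : R) ^+ 10 <= 41 / 50 by rewrite !exprS expr0; lra.
rewrite (_ : 50 = 10 * 5)%N // exprM.
apply: le_trans (_ : (41 / 50 : R) ^+ 5 <= 1 / 2); last by rewrite !exprS expr0; lra.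
by apply: lerXn2r => //; rewrite nnegrE ?exprn_ge0 //; lra.
Qed.

Lemma sum_rho_lt1 (I : finType) (P : pred I) (M : I -> nat) (n : nat) :
  #|I| = (2 ^ n * 2 ^ n)%N -> (forall i, P i -> 50 * (2 * n + 1) <= M i)%N ->
  \sum_(i | P i) (49 / 50 : R) ^+ M i < 1.
Proof.
move=> cardI Mlarge.
apply: (@le_lt_trans _ _ (\sum_(i : I) (1 / 2 : R) ^+ (2 * n + 1))).
  rewrite [X in _ <= X](bigID P) /= -[X in X <= _]addr0 lerD //; last first.
    by apply: sumr_ge0 => i _; apply: exprn_ge0; lra.
  apply: ler_sum => i Pi; apply: le_trans (_ : (49 / 50 : R) ^+ (50 * (2 * n + 1)) <= _).
    by apply: ler_wiXn2l; [lra | lra | exact: Mlarge].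
  have := rho50_le_half.
  by rewrite exprM; apply: lerXn2r => //; rewrite ?nnegrE ?exprn_ge0 //; lra.
rewrite sumr_const (_ : #|_| = #|I|) // cardI.
rewrite -(mulr_natr ((1 / 2 : R) ^+ (2 * n + 1))) natrM !natrX.
have -> : (1 / 2 : R) ^+ (2 * n + 1) * (2 ^+ n * 2 ^+ n) = 1 / 2.
  rewrite -exprD addnn -mul2n addn1 exprS -mulrA -exprMn.
  by rewrite (_ : (1 / 2 : R) * 2 = 1) ?expr1n ?mulr1 //; field.
lra.
Qed.

Lemma quarter_density (p eps : R) (s t M Y e : nat) :
  (p - 4 * eps) * (s%:R * t%:R) <= M%:R -> (M <= 4 * Y)%N ->
  (p / 4 - eps) * s%:R * t%:R <= (e + Y)%:R.
Proof.
rewrite -(ler_nat R) natrM natrD => hM hY.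
have : 0 <= e%:R :> R := ler0n _ _.
have -> : (p / 4 - eps) * s%:R * t%:R = (p - 4 * eps) * (s%:R * t%:R) / 4 by field.
lra.
Qed.

Lemma eventually_lt_mul (c a : R) : 0 < a ->
  exists n0 : nat, forall n, (n0 <= n)%N -> c < a * n%:R.
Proof.
move=> a0; exists (Num.truncn (a^-1 * c)).+1 => n n0n.
rewrite -ltr_pdivrMl //; apply: lt_le_trans (truncnS_gt _) _.
by rewrite ler_nat.
Qed.

End Estimates.

Local Open Scope ring_scope.

Definition dense_pair (R : realType) n (eps : R) (ST : {set 'I_n} * {set 'I_n}) :=
  [&& [disjoint ST.1 & ST.2], eps * n%:R <= #|ST.1|%:R & eps * n%:R <= #|ST.2|%:R].

Lemma lower_regularP (R : realType) n (D : rel 'I_n) (q eps : R) :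
  lower_regular D q eps <-> forall ST, dense_pair eps ST ->
    (q - eps) * #|ST.1|%:R * #|ST.2|%:R <= (e_rel D ST.1 ST.2)%:R.
Proof.
split=> [h [S T] /and3P[] | h S T dST hS hT]; first exact: h.
by apply: (h (S, T)); rewrite /dense_pair dST hS hT.
Qed.

Lemma eulerian_orientation_lower_regular (R : realType) (p eps : R) n (G : rel 'I_n) :
  0 < p < 1 -> 0 < eps <= p / 8 ->
  2 < 3 * eps ^+ 3 * (3 * eps ^+ 3) * n%:R -> 300 < p * (eps * eps) * n%:R ->
  even_graph G -> lower_regular G p eps ->
  exists D, orientation G D /\ eulerian D /\ lower_regular D (p / 4) eps.
Proof.
move=> /andP[p0 p1] /andP[e0 ep] hd hp GE /lower_regularP Greg.
have [L [qs [GL noC4 eG orient]]] := c4_decomposition GE.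
have [D0 [OD0 ED0]] := has_eulerian_orientation_even GL.
have d01 : 0 < 3 * eps ^+ 3 <= 1.
  have : eps ^+ 3 <= eps by rewrite -[leRHS]expr1; apply: ler_wiXn2l => //; lra.
  have : 0 < eps ^+ 3 by exact: exprn_gt0.
  lra.
(* Between a dense pair, the remainder has at most 3 eps^3 n^2 <= 3 eps |S||T| arcs. *)
have remainder := le_of_mul_le_cube d01 hd (c4_free_arcs_mul_le noC4).
have many ST : dense_pair eps ST ->
    (p - 4 * eps) * (#|ST.1|%:R * #|ST.2|%:R) <= (sum_both (arcs_in_cycle ST.1 ST.2) qs)%:R.
  case: ST => S T dST; have /and3P[_ hS hT] := dST.
  apply: (pair_arcs_lower (n := n) (mL := e_rel L S T)) => //; first by rewrite -eG; exact: Greg.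
  by apply: le_trans remainder; rewrite ler_nat e_rel_le_setT.
have small :
    \sum_(ST | dense_pair eps ST) (49 / 50 : R) ^+ sum_both (arcs_in_cycle ST.1 ST.2) qs < 1.
  apply: (@sum_rho_lt1 R _ _ _ n).
    by rewrite card_prod -cardsT -powersetT card_powerset cardsT card_ord.
  move=> ST dST; have /and3P[_ hS hT] := dST.
  exact: pair_arcs_many p0 e0 ep hp hS hT (many ST dST).
have [bs good] := exists_choice_all_high (fun ST => arcs_in_cycle_le4 ST.1 ST.2) small.
have [OD ED eD] := orient D0 bs OD0 ED0.
exists (orient_cycles D0 qs bs); split => //; split => //; apply/lower_regularP => ST dST.
by rewrite eD; apply: quarter_density (many ST dST) (good ST dST).
Qed.

Theorem lemma3p11 (R : realType) (p alpha : R) :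
  0 < p < 1 -> 0 < alpha < 1 ->
  exists eps0 : R, 0 < eps0 /\
  forall eps : R, 0 < eps -> eps <= eps0 ->
  exists n0 : nat, forall (n : nat) (G : rel 'I_n),
    (n0 <= n)%N ->
    simple_graph G ->
    (forall v, ~~ odd (deg G v)) ->
    lower_regular G p eps ->
    (forall v, alpha * n%:R <= (deg G v)%:R) ->
    exists D : rel 'I_n,
      orientation G D /\ eulerian D /\ lower_regular D (p / 4) eps.
Proof.
move=> p01 _; have p0 : 0 < p by case/andP: p01.
exists (p / 8); split; first lra.
move=> eps e0 ep; have e3 : 0 < 3 * eps ^+ 3 by rewrite mulr_gt0 ?exprn_gt0.
have [n1 large1] := eventually_lt_mul 2 (mulr_gt0 e3 e3).
have [n2 large2] := eventually_lt_mul 300 (mulr_gt0 p0 (mulr_gt0 e0 e0)).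
exists (maxn n1 n2) => n G; rewrite geq_max => /andP[/large1 hd /large2 hp] [Gs Gi] Ge Greg _.
apply: eulerian_orientation_lower_regular => //; first by rewrite e0 ep.
by split => // x; apply: negbTE.
Qed.
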